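(* For any sequence $\{z_k\}_{k\ge1}$ of complex numbers, for Lebesgue-almost every $r\in(0,\infty)$ we have $\liminf_{n\to\infty}\left(\inf_{|z|=r}|z-z_n|\right)^{1/n}\ge1$. *)

From Stdlib Require Import Reals Lra.
Open Scope R_scope.

Definition Cplx : Type := (R * R)%type.
Definition Cmod (z : Cplx) : R := sqrt (fst z * fst z + snd z * snd z).
Definition Csub (z w : Cplx) : Cplx := (fst z - fst w, snd z - snd w).

Definition is_inf (S : R -> Prop) (m : R) : Prop :=
  (forall x, S x -> m <= x) /\ (forall l, (forall x, S x -> l <= x) -> l <= m).

Definition circle_dists (r : R) (w : Cplx) (x : R) : Prop :=
  exists z : Cplx, Cmod z = r /\ x = Cmod (Csub z w).

(* x^(1/n) for x >= 0 and n >= 1 (with 0^(1/n) = 0). *)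
Definition nroot (x : R) (n : nat) : R :=
  if Req_EM_T x 0 then 0 else Rpower x (/ INR n).

(* liminf_{n -> oo} u n >= 1, unfolded: for every eps > 0, eventually u n >= 1 - eps.
   (Sequences are indexed from 1.) *)
Definition liminf_ge1 (u : nat -> R) : Prop :=
  forall eps, eps > 0 -> exists N : nat, forall n : nat,
    (1 <= n)%nat -> (N <= n)%nat -> u n >= 1 - eps.

Definition lebesgue_null (E : R -> Prop) : Prop :=
  forall eps, eps > 0 -> exists a b : nat -> R,
    (forall k, a k <= b k) /\
    (forall x, E x -> exists k, a k < x < b k) /\
    (forall N, sum_f_R0 (fun k => b k - a k) N <= eps).

(* If the n-th root of d_n = inf_{|z|=r} |z - z_n| = | r - |z_n| | stays below some
   q < 1 infinitely often, then r lies within q^n of |z_n| for arbitrarily large n.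
   Since q^n decays faster than any power of 1/n, every such r lies in one of the
   intervals ( |z_k| - rho_k, |z_k| + rho_k ) with rho_k = eps / (2 (k+1)(k+2)),
   whose lengths sum to less than eps. *)

From Stdlib Require Import Reals Lra Lia Classical FunctionalExtensionality.
Open Scope R_scope.

Lemma Cmod_ge0 w : 0 <= Cmod w.
Proof. apply sqrt_pos. Qed.

Lemma Cmod_scal c w : Cmod (c * fst w, c * snd w) = Rabs c * Cmod w.
Proof.
  unfold Cmod; simpl.
  replace (c * fst w * (c * fst w) + c * snd w * (c * snd w))
    with (Rsqr c * (fst w * fst w + snd w * snd w)) by (unfold Rsqr; ring).
  rewrite sqrt_mult_alt by apply Rle_0_sqr.
  now rewrite sqrt_Rsqr_abs.
Qed.

Lemma Cmod_eq0 w : Cmod w = 0 -> w = (0, 0).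
Proof.
  destruct w as [w1 w2]; unfold Cmod; simpl; intros H.
  apply sqrt_eq_0 in H; [|nra].
  assert (w1 = 0) by nra; assert (w2 = 0) by nra; now subst.
Qed.

Lemma Cmod_sqr w : Cmod w * Cmod w = fst w * fst w + snd w * snd w.
Proof. apply sqrt_sqrt; nra. Qed.

Lemma Cmod_Csub_ge z w : Rabs (Cmod z - Cmod w) <= Cmod (Csub z w).
Proof.
  assert (Hdot : fst z * fst w + snd z * snd w <= Cmod z * Cmod w) by apply sqrt_cauchy.
  pose proof (Cmod_sqr z); pose proof (Cmod_sqr w).
  rewrite <- sqrt_Rsqr_abs; apply sqrt_le_1_alt.
  unfold Rsqr, Csub; simpl; nra.
Qed.

Lemma circle_dists_attained r w : 0 < r -> circle_dists r w (Rabs (r - Cmod w)).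
Proof.
  intros Hr.
  destruct (Req_dec (Cmod w) 0) as [Hw0 | Hw0].
  - rewrite Hw0, (Cmod_eq0 w Hw0).
    exists (r, 0); unfold Cmod, Csub; simpl.
    rewrite !Rminus_0_r, Rmult_0_l, Rplus_0_r, sqrt_square, Rabs_pos_eq by lra.
    split; reflexivity.
  - exists (r / Cmod w * fst w, r / Cmod w * snd w); split.
    + rewrite Cmod_scal, Rabs_pos_eq; [field; auto |].
      pose proof (Cmod_ge0 w); apply Rle_mult_inv_pos; lra.
    + replace (Csub _ w) with ((r / Cmod w - 1) * fst w, (r / Cmod w - 1) * snd w)
        by (unfold Csub; simpl; f_equal; ring).
      rewrite Cmod_scal; replace (r - Cmod w) with ((r / Cmod w - 1) * Cmod w) by (field; auto).
      now rewrite Rabs_mult, (Rabs_pos_eq (Cmod w)) by apply Cmod_ge0.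
Qed.

Lemma is_inf_circle_dists r w : 0 < r -> is_inf (circle_dists r w) (Rabs (r - Cmod w)).
Proof.
  intros Hr; split.
  - intros x [z [<- ->]]; apply Cmod_Csub_ge.
  - intros l Hl; now apply Hl, circle_dists_attained.
Qed.

Lemma is_inf_unique S m m' : is_inf S m -> is_inf S m' -> m = m'.
Proof.
  intros [Hm Hmg] [Hm' Hmg']; apply Rle_antisym; [apply Hmg' | apply Hmg]; assumption.
Qed.

Lemma nroot_ge0 x n : 0 <= nroot x n.
Proof.
  unfold nroot; destruct Req_EM_T; [lra | left; apply exp_pos].
Qed.

Lemma nroot_lt_pow x q n :
  0 <= x -> 0 < q -> (1 <= n)%nat -> nroot x n < q -> x < q ^ n.
Proof.
  intros Hx Hq Hn; unfold nroot; destruct Req_EM_T as [-> | Hx0]; intros Hlt.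
  - now apply pow_lt.
  - assert (HnR : 0 < INR n) by (apply lt_0_INR; lia).
    rewrite <- Rpower_pow by assumption.
    replace x with (Rpower (Rpower x (/ INR n)) (INR n)).
    + apply Rlt_Rpower_l; [assumption | split; [apply exp_pos | assumption]].
    + rewrite Rpower_mult, Rinv_l, Rpower_1; lra.
Qed.

(* Write q^n = exp(-3 a n) with a > 0; then exp(a n) >= a n gives q^n < 1/(a n)^3. *)
Lemma poly_mul_pow_vanishes q c :
  0 < q < 1 -> 0 < c -> exists N : nat, forall n : nat,
  (1 <= n)%nat -> (N <= n)%nat -> (INR n + 1) * (INR n + 2) * q ^ n < c.
Proof.
  intros Hq Hc.
  set (a := - ln q / 3).
  assert (Ha : 0 < a).
  { assert (ln q < 0) by (rewrite <- ln_1; apply ln_increasing; lra). unfold a; lra. }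
  assert (Hlnq : ln q = - (3 * a)) by (unfold a; field).
  clearbody a.
  destruct (INR_unbounded (6 / (c * (a * a * a)))) as [N HN].
  exists N; intros n Hn1 HNn.
  set (x := INR n).
  assert (Hx1 : 1 <= x) by (apply (le_INR 1); assumption).
  assert (HxN : 6 <= c * (a * a * a) * x).
  { assert (HC : 0 < c * (a * a * a)) by (repeat apply Rmult_lt_0_compat; lra).
    assert (INR N <= x) by (apply le_INR; assumption).
    set (C := c * (a * a * a)) in *.
    assert (6 = C * (6 / C)) by (field; lra).
    nra. }
  set (E := exp (x * a)).
  assert (HE : x * a < E) by (pose proof (exp_ineq1_le (x * a)); unfold E; lra).
  assert (Hqn : q ^ n * (E * E * E) = 1).
  { unfold E; rewrite <- (exp_ln (q ^ n)), ln_pow, Hlnq by (try apply pow_lt; lra).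
    rewrite <- !exp_plus, <- exp_0; f_equal.
    unfold x; ring. }
  assert (Hpos : 0 < q ^ n) by (apply pow_lt; lra).
  assert (Hxa : 0 < x * a) by nra.
  assert (x * a * (x * a) < E * E) by nra.
  assert (HE3 : x * a * (x * a) * (x * a) < E * E * E) by nra.
  assert ((x + 1) * (x + 2) <= c * (x * a * (x * a) * (x * a))).
  { replace (c * (x * a * (x * a) * (x * a))) with (x * x * (c * (a * a * a) * x)) by ring.
    nra. }
  assert ((x + 1) * (x + 2) < c * (E * E * E)) by nra.
  nra.
Qed.

Definition cover_radius (eps : R) (k : nat) : R := eps / (2 * (INR k + 1) * (INR k + 2)).

Lemma cover_radius_pos eps k : 0 < eps -> 0 < cover_radius eps k.
Proof.
  intros He; pose proof (pos_INR k); unfold cover_radius.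
  apply Rdiv_lt_0_compat; nra.
Qed.

Lemma sum_cover_diameters eps N :
  sum_f_R0 (fun k => 2 * cover_radius eps k) N = eps - eps / (INR N + 2).
Proof.
  unfold cover_radius; induction N as [| N IH].
  - simpl; field.
  - rewrite tech5, IH, S_INR; pose proof (pos_INR N); field; lra.
Qed.

Lemma not_liminf_ge1_frequently u :
  ~ liminf_ge1 u -> exists e, e > 0 /\
  forall N : nat, exists n : nat, (1 <= n)%nat /\ (N <= n)%nat /\ u n < 1 - e.
Proof.
  intros Hu; apply NNPP; intros Hno; apply Hu; intros e He.
  apply NNPP; intros HN; apply Hno; exists e; split; [assumption |].
  intros N; apply NNPP; intros Hn; apply HN; exists N; intros n Hn1 HNn.
  apply Rnot_lt_ge; intros Hlt; apply Hn; now exists n.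
Qed.

Lemma not_liminf_ge1_nroot_lt_cover_radius (D : nat -> R) eps :
  (forall n, 0 <= D n) -> ~ liminf_ge1 (fun n => nroot (D n) n) -> 0 < eps ->
  exists n, D n < cover_radius eps n.
Proof.
  intros HD Hlim He.
  destruct (not_liminf_ge1_frequently _ Hlim) as [e [He0 Hfreq]].
  set (q := 1 - e).
  assert (Hq : 0 < q < 1).
  { destruct (Hfreq 0%nat) as [n [_ [_ Hn]]]; pose proof (nroot_ge0 (D n) n); unfold q; lra. }
  destruct (poly_mul_pow_vanishes q (eps / 2) Hq) as [N HN]; [lra |].
  destruct (Hfreq N) as [n [Hn1 [HNn Hlt]]]; exists n.
  apply Rlt_trans with (q ^ n); [now apply nroot_lt_pow |].
  specialize (HN n Hn1 HNn); pose proof (pos_INR n).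
  unfold cover_radius; set (P := 2 * (INR n + 1) * (INR n + 2)).
  assert (HP : 0 < P) by (unfold P; nra).
  apply (Rmult_lt_reg_r P); [assumption |].
  replace (eps / P * P) with eps by (field; lra); unfold P; nra.
Qed.

Theorem mainTheorem10 (z : nat -> Cplx) :
  lebesgue_null (fun r => 0 < r /\
    ~ (forall d : nat -> R,
         (forall n, is_inf (circle_dists r (z n)) (d n)) ->
         liminf_ge1 (fun n => nroot (d n) n))).
Proof.
  intros eps Heps.
  exists (fun k => Cmod (z k) - cover_radius eps k), (fun k => Cmod (z k) + cover_radius eps k).
  split; [| split].
  - intros k; pose proof (cover_radius_pos eps k Heps); lra.
  - intros r [Hr Hbad].
    assert (Hlim : ~ liminf_ge1 (fun n => nroot (Rabs (r - Cmod (z n))) n)).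
    { intros Hlim; apply Hbad; intros d Hd.
      replace d with (fun n => Rabs (r - Cmod (z n))); [assumption |].
      apply functional_extensionality; intros n.
      apply (is_inf_unique _ _ _ (is_inf_circle_dists r (z n) Hr) (Hd n)). }
    destruct (not_liminf_ge1_nroot_lt_cover_radius _ eps (fun n => Rabs_pos _) Hlim Heps) as [k Hk].
    exists k; apply Rabs_def2 in Hk; lra.
  - intros N; rewrite (sum_eq _ (fun k => 2 * cover_radius eps k)) by (intros; ring).
    rewrite sum_cover_diameters.
    assert (0 < eps / (INR N + 2)) by (pose proof (pos_INR N); apply Rdiv_lt_0_compat; lra).
    lra.
Qed.
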